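(* Let $d\ge1$ and let $x_1,\dots,x_t$ be positive integers such that no value occurs more than $d$ times among them. Then $\prod_{i=1}^t x_i\ge\big(\frac{t}{ed}\big)^t$. *)

From Stdlib Require Export Reals List Arith Lia Lra.
Export ListNotations.

(* Removing a largest element M of the list: since every value lies in
   [1, M] and occurs at most d times, the list has at most d M elements, so
   M >= t / d.  Induction gives t! <= d^t * x_1 ... x_t, and t^t <= e^t t!
   follows from (1 + 1/t)^t <= e. *)

From Stdlib Require Import Permutation.
Open Scope R_scope.

Local Notation prod := (fold_right Nat.mul 1%nat).

Section CountRemove.

Variable A : Type.
Variable eq_dec : forall x y : A, {x = y} + {x <> y}.

Lemma length_remove_count (x : A) (l : list A) :
  length l = (count_occ eq_dec l x + length (remove eq_dec x l))%nat.
Proof.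
  induction l as [|a l IH]; simpl; [reflexivity|].
  destruct (eq_dec x a), (eq_dec a x); simpl; subst; try congruence; lia.
Qed.

Lemma count_occ_remove_le (x v : A) (l : list A) :
  (count_occ eq_dec (remove eq_dec x l) v <= count_occ eq_dec l v)%nat.
Proof.
  induction l as [|a l IH]; simpl; [lia|].
  destruct (eq_dec x a); simpl; destruct (eq_dec a v); lia.
Qed.

End CountRemove.

Lemma list_max_In (l : list nat) : l <> [] -> In (list_max l) l.
Proof.
  induction l as [|a [|b l] IH]; intros Hl; [congruence| left; simpl; lia |].
  change (list_max (a :: b :: l)) with (Nat.max a (list_max (b :: l))).
  destruct (Nat.max_spec a (list_max (b :: l))) as [[_ ->]|[_ ->]].
  - right. apply IH. discriminate.
  - left. reflexivity.
Qed.

Lemma Permutation_list_max (l : list nat) :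
  l <> [] -> exists l', Permutation l (list_max l :: l').
Proof.
  intros Hl.
  destruct (in_split _ _ (list_max_In l Hl)) as [l1 [l2 Hsplit]].
  exists (l1 ++ l2). rewrite Hsplit at 1. symmetry. apply Permutation_middle.
Qed.

Lemma Permutation_prod (l l' : list nat) : Permutation l l' -> prod l = prod l'.
Proof. induction 1; simpl; lia. Qed.

Lemma length_le_mul_of_count_le (d M : nat) (l : list nat) :
  (forall x, In x l -> (0 < x <= M)%nat) ->
  (forall v, (count_occ Nat.eq_dec l v <= d)%nat) ->
  (length l <= d * M)%nat.
Proof.
  revert l; induction M as [|M IH]; intros l Hrange Hcount.
  - destruct l as [|a l]; simpl; [lia|].
    specialize (Hrange a (or_introl eq_refl)). lia.
  - rewrite (length_remove_count _ Nat.eq_dec (S M) l).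
    assert (length (remove Nat.eq_dec (S M) l) <= d * M)%nat.
    { apply IH.
      - intros x Hx. apply in_remove in Hx as [Hx Hne].
        specialize (Hrange x Hx). lia.
      - intros v. specialize (Hcount v).
        pose proof (count_occ_remove_le _ Nat.eq_dec (S M) v l). lia. }
    specialize (Hcount (S M)). lia.
Qed.

Lemma fact_le_pow_mul_prod (d : nat) (l : list nat) :
  (forall x, In x l -> (0 < x)%nat) ->
  (forall v, (count_occ Nat.eq_dec l v <= d)%nat) ->
  (fact (length l) <= d ^ length l * prod l)%nat.
Proof.
  remember (length l) as n eqn:Hn; revert l Hn.
  induction n as [|n IH]; intros l Hn Hpos Hcount.
  - destruct l; [simpl; lia | discriminate].
  - assert (Hl : l <> []) by (intros ->; discriminate).
    set (M := list_max l).
    destruct (Permutation_list_max l Hl) as [l' Hperm]; fold M in Hperm.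
    assert (Hbound : (S n <= d * M)%nat).
    { rewrite Hn. apply length_le_mul_of_count_le; [|assumption].
      intros x Hx. split; [auto|].
      exact (proj1 (Forall_forall _ l) (proj1 (list_max_le l M) (le_n _)) x Hx). }
    assert (Hrest : (fact n <= d ^ n * prod l')%nat).
    { apply IH.
      - apply Permutation_length in Hperm. simpl in Hperm. lia.
      - intros x Hx. apply Hpos, (Permutation_in _ (Permutation_sym Hperm)).
        right. exact Hx.
      - intros v. specialize (Hcount v).
        rewrite (proj1 (Permutation_count_occ Nat.eq_dec _ _) Hperm) in Hcount.
        simpl in Hcount. destruct (Nat.eq_dec M v); lia. }
    rewrite (Permutation_prod _ _ Hperm). simpl.
    change (fact (S n)) with (S n * fact n)%nat.
    pose proof (Nat.mul_le_mono _ _ _ _ Hbound Hrest). nia.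
Qed.

Lemma exp_mul_INR (x : R) (n : nat) : exp (INR n * x) = exp x ^ n.
Proof. rewrite <- (Rpower_pow n _ (exp_pos x)). unfold Rpower. now rewrite ln_exp. Qed.

Lemma pow_succ_le_exp_mul_pow (t : nat) : INR (S t) ^ t <= exp 1 * INR t ^ t.
Proof.
  destruct t as [|t].
  - simpl. pose proof (exp_ineq1_le 1). lra.
  - assert (Hu : 0 < INR (S t)) by (apply lt_0_INR; lia).
    assert (Hsplit : INR (S (S t)) = INR (S t) * (1 + / INR (S t)))
      by (rewrite (S_INR (S t)); field; lra).
    assert (Hbase : (1 + / INR (S t)) ^ S t <= exp 1).
    { replace (exp 1) with (exp (/ INR (S t)) ^ S t)
        by (rewrite <- exp_mul_INR, Rinv_r; lra).
      apply pow_incr. split.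
      - pose proof (Rinv_0_lt_compat _ Hu). lra.
      - apply exp_ineq1_le. }
    rewrite Hsplit, Rpow_mult_distr, Rmult_comm.
    apply Rmult_le_compat_r; [apply pow_le; lra | exact Hbase].
Qed.

Lemma pow_le_exp_pow_mul_fact (t : nat) : INR t ^ t <= exp 1 ^ t * INR (fact t).
Proof.
  induction t as [|t IH]; [simpl; lra|].
  change (fact (S t)) with (S t * fact t)%nat.
  rewrite mult_INR. simpl pow.
  pose proof (pos_INR (S t)) as HS.
  pose proof (exp_pos 1) as He.
  apply Rle_trans with (INR (S t) * (exp 1 * INR t ^ t)).
  - apply Rmult_le_compat_l; [exact HS | apply pow_succ_le_exp_mul_pow].
  - apply Rmult_le_compat_l with (r := exp 1) in IH; [|exact (Rlt_le _ _ He)].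
    apply Rmult_le_compat_l with (r := INR (S t)) in IH; [|exact HS].
    lra.
Qed.

Theorem proposition7p2 (d : nat) (xs : list nat) :
  (1 <= d)%nat ->
  (forall x, In x xs -> (0 < x)%nat) ->
  (forall v : nat, (count_occ Nat.eq_dec xs v <= d)%nat) ->
  INR (fold_right Nat.mul 1%nat xs) >=
    (INR (length xs) / (exp 1 * INR d)) ^ (length xs).
Proof.
  intros Hd Hpos Hcount.
  pose proof (fact_le_pow_mul_prod d xs Hpos Hcount) as Hfact.
  apply le_INR in Hfact. rewrite mult_INR, pow_INR in Hfact.
  set (t := length xs) in *.
  pose proof (pow_le_exp_pow_mul_fact t) as Hpow.
  assert (HeD : 0 < exp 1 * INR d)
    by (apply Rmult_lt_0_compat; [apply exp_pos | apply lt_0_INR; lia]).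
  apply Rle_ge. unfold Rdiv. rewrite Rpow_mult_distr, pow_inv.
  apply (Rmult_le_reg_r ((exp 1 * INR d) ^ t)); [apply pow_lt; exact HeD|].
  rewrite Rmult_assoc, Rinv_l, Rmult_1_r by (apply pow_nonzero; lra).
  rewrite Rpow_mult_distr.
  apply Rmult_le_compat_l with (r := exp 1 ^ t) in Hfact;
    [|apply pow_le, Rlt_le, exp_pos].
  lra.
Qed.
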